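(* Let $n\ge1$, $0=b_0<b_1<\dots<b_n<b_{n+1}=1$, $h_i=b_{i+1}-b_i$ ($i=0,\dots,n$), $h_{\min}=\min_{0\le i\le n}h_i$, $\tilde h_i=\min\{h_{i-1},h_i\}$ ($i=1,\dots,n$). Let $w\in C(I)$, $I=(0,1)$, with $0\le w_0\le w(x)$ for all $x\in I$. Then for all $\boldsymbol\alpha=(\alpha_0,\dots,\alpha_n)^T\in\mathbb{R}^{n+1}$, $\boldsymbol\beta=(\beta_1,\dots,\beta_n)^T\in\mathbb{R}^n$: $$(\boldsymbol\alpha^T,\boldsymbol\beta^T)\,\mathbb{H}_\Sigma(w)\begin{pmatrix}\boldsymbol\alpha\\ \boldsymbol\beta\end{pmatrix}\ \ge\ \frac{w_0h_{\min}^3}{96}|\boldsymbol\alpha|^2+\frac{w_0}{24}\sum_{i=1}^n\tilde h_i\beta_i^2,$$ and, if $w_0>0$, then for every $\tau\in(0,1]$, $$(\boldsymbol\alpha^T,\boldsymbol\beta^T)\,\mathbb{H}_\Lambda(w)\begin{pmatrix}\boldsymbol\alpha\\ \boldsymbol\beta\end{pmatrix}\ \ge\ \frac{w_0(1-\tau)h_{\min}}{4}|\boldsymbol\alpha|^2-\frac{1}{2\tau w_0}\sum_{i=1}^n w(b_i)^2\big(h_{i-1}^{-1}+h_i^{-1}\big)\beta_i^2,$$ where $|\boldsymbol\alpha|$ is the Euclidean norm.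
   Context: $\sigma(t)=\max\{0,t\}$; $H(t)=1$ for $t>0$, $H(0)=1/2$, $H(t)=0$ for $t<0$. Set $\sigma_i(x)=\sigma(x-b_i)$, $H_i(x)=H(x-b_i)$. $\mathbb{H}_\Sigma(w)$ is the symmetric $(2n+1)\times(2n+1)$ matrix with blocks: upper-left $(\int_0^1 w\,\sigma_i\sigma_j\,dx)_{i,j=0}^n$, upper-right $(-\int_0^1 w\,\sigma_iH_j\,dx)_{i=0..n,\,j=1..n}$, lower-left its transpose, lower-right $(\int_0^1 w\,H_iH_j\,dx)_{i,j=1}^n$. $\mathbb{H}_\Lambda(w)$ is the symmetric $(2n+1)\times(2n+1)$ matrix with blocks: upper-left $(\int_0^1 w\,H_iH_j\,dx)_{i,j=0}^n$, upper-right $K=(K_{ij})_{i=0..n,\,j=1..n}$ with $K_{ij}=-w(b_j)H(b_j-b_i)$ (i.e. the formal integral $-\int_0^1 w(x)H_i(x)\delta(x-b_j)dx$), lower-left $K^T$, lower-right the zero $n\times n$ matrix. *)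

From HB Require Import structures.
From mathcomp Require Import all_boot all_order all_algebra.
From mathcomp Require Import all_classical all_reals all_analysis.
Set Implicit Arguments. Unset Strict Implicit. Unset Printing Implicit Defensive.
Import Order.TTheory GRing.Theory Num.Theory.
Import numFieldNormedType.Exports.
Local Open Scope classical_set_scope.
Local Open Scope ring_scope.

Section Defs.
Variable R : realType.

Definition relu (t : R) : R := Num.max 0 t.
Definition heav (t : R) : R := if 0 < t then 1 else if t == 0 then 1 / 2 else 0.

Definition I01 (f : R -> R) : R :=
  Rintegral (@lebesgue_measure R) `]0%R, 1%R[ f.

(* b : nat -> R gives the breakpoints b_0, ..., b_{n+1} *)
Definition HSigma (n : nat) (b : nat -> R) (w : R -> R) : 'M[R]_(n.+1 + n) :=
  block_mx
    (\matrix_(i < n.+1, j < n.+1)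
        I01 (fun x => w x * relu (x - b i) * relu (x - b j)))
    (\matrix_(i < n.+1, j < n)
        - I01 (fun x => w x * relu (x - b i) * heav (x - b j.+1)))
    (\matrix_(i < n, j < n.+1)
        - I01 (fun x => w x * relu (x - b j) * heav (x - b i.+1)))
    (\matrix_(i < n, j < n)
        I01 (fun x => w x * heav (x - b i.+1) * heav (x - b j.+1))).

Definition HLambda (n : nat) (b : nat -> R) (w : R -> R) : 'M[R]_(n.+1 + n) :=
  block_mx
    (\matrix_(i < n.+1, j < n.+1)
        I01 (fun x => w x * heav (x - b i) * heav (x - b j)))
    (\matrix_(i < n.+1, j < n)
        - (w (b j.+1) * heav (b j.+1 - b i)))
    (\matrix_(i < n, j < n.+1)
        - (w (b i.+1) * heav (b i.+1 - b j)))
    0.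

Definition qform (n : nat) (M : 'M[R]_(n.+1 + n))
    (alpha : 'rV[R]_n.+1) (beta : 'rV[R]_n) : R :=
  let v := row_mx alpha beta in (v *m M *m v^T) 0 0.

Definition hh (b : nat -> R) (i : nat) : R := b i.+1 - b i.

Definition hmin (n : nat) (b : nat -> R) : R :=
  \big[Num.min/hh b 0]_(i < n.+1) hh b i.

Definition htil (b : nat -> R) (i : nat) : R := Num.min (hh b i.-1) (hh b i).

End Defs.

From HB Require Import structures.
From mathcomp Require Import all_boot all_order all_algebra.
From mathcomp Require Import all_classical all_reals all_analysis.
From mathcomp Require Import measurable_realfun ring lra.
Import Order.TTheory GRing.Theory Num.Theory.
Import numFieldNormedType.Exports.
Local Open Scope classical_set_scope.
Local Open Scope ring_scope.

(* Let u = sum_i alpha_i sigma_i - sum_j beta_j H_j.  On the k-th piece (b_k, b_{k+1}), u is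
   affine with slope c_k = alpha_0 + ... + alpha_k, left value U_k and right value
   V_k = U_k + c_k h_k, and beta_j = V_j - U_{j+1} is the jump of u at b_{j+1}.  As H_Sigma(w)
   is the Gram matrix of (sigma_0, ..., sigma_n, -H_1, ..., -H_n) for the weight w, its form
   is the integral of w u^2, at least w_0 times the sum over the pieces of the integral of u^2,
   and each of these dominates h_k (U_k^2 + V_k^2) / 12 + h_k^3 c_k^2 / 24: the first part
   controls the jumps beta_j, the second |alpha|^2 <= 4 sum_k c_k^2.
   For H_Lambda(w), v = sum_i alpha_i H_i equals c_k on the k-th piece and (c_j + c_{j+1}) / 2
   at b_{j+1}, so the form is the integral of w v^2 minus sum_j beta_j w(b_{j+1}) (c_j + c_{j+1});
   AM-GM with weight tau w_0 h_k absorbs the coupling into a tau-fraction of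
   w_0 sum_k h_k c_k^2 >= w_0 h_min |alpha|^2 / 4. *)

Set Implicit Arguments.
Unset Strict Implicit.
Unset Printing Implicit Defensive.

Local Notation mu := (@lebesgue_measure _).

Section real_inequalities.
Context {R : realFieldType}.

Lemma big_ord_trunc (m k : nat) (F : nat -> R) : (k <= m)%N ->
  (forall i, (k <= i < m)%N -> F i = 0) -> \sum_(i < m) F i = \sum_(i < k) F i.
Proof.
move=> km F0; rewrite (big_ord_widen m F km) [RHS]big_mkcond /=.
by apply: eq_bigr => i _; case: ltnP => // ki; rewrite F0 // ki ltn_ord.
Qed.

Lemma sum_shift_le (n : nat) (F G : nat -> R) :
  (forall k, (k <= n)%N -> 0 <= F k) -> (forall k, (k <= n)%N -> 0 <= G k) ->
  \sum_(j < n) (F j + G j.+1) <= \sum_(k < n.+1) (F k + G k).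
Proof.
move=> F0 G0; rewrite !big_split /= big_ord_recr [X in _ <= _ + X]big_ord_recl /=.
by apply: lerD; [rewrite lerDl F0 | rewrite /bump /= lerDr G0].
Qed.

Lemma mul_le_AMGM (e x y : R) : 0 < e -> x * y <= e / 2 * x ^+ 2 + y ^+ 2 / (2 * e).
Proof.
move=> e0; rewrite -subr_ge0.
have -> : e / 2 * x ^+ 2 + y ^+ 2 / (2 * e) - x * y = (e * x - y) ^+ 2 / (2 * e).
  by field; rewrite gt_eqF.
by rewrite divr_ge0 ?sqr_ge0// mulr_ge0// ltW.
Qed.

Lemma affine_energy_ge (h U s : R) : 0 <= h ->
  h * (U ^+ 2 + (U + s * h) ^+ 2) / 12 + h ^+ 3 * s ^+ 2 / 24
  <= h * U ^+ 2 + U * s * h ^+ 2 + s ^+ 2 * h ^+ 3 / 3.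
Proof.
move=> h0; rewrite -subr_ge0.
have -> : h * U ^+ 2 + U * s * h ^+ 2 + s ^+ 2 * h ^+ 3 / 3 -
    (h * (U ^+ 2 + (U + s * h) ^+ 2) / 12 + h ^+ 3 * s ^+ 2 / 24) =
    5 * h * (2 * U + s * h) ^+ 2 / 24 by field.
by have := sqr_ge0 (2 * U + s * h); nra.
Qed.

Lemma jump_sqr_le (h h' V U : R) : 0 <= h -> 0 <= h' ->
  Num.min h h' * (V - U) ^+ 2 <= 2 * (h * V ^+ 2) + 2 * (h' * U ^+ 2).
Proof.
move=> h0 h'0; have hm0 : 0 <= Num.min h h' by rewrite le_min h0.
have : Num.min h h' * (V - U) ^+ 2 <= Num.min h h' * (2 * V ^+ 2 + 2 * U ^+ 2).
  by rewrite ler_wpM2l//; have := sqr_ge0 (V + U); lra.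
have min_h : Num.min h h' <= h by rewrite ge_min lexx.
have min_h' : Num.min h h' <= h' by rewrite ge_min lexx orbT.
have := ler_wpM2r (sqr_ge0 V) min_h; have := ler_wpM2r (sqr_ge0 U) min_h'.
lra.
Qed.

Lemma cross_term_le (e h h' x x' y : R) : 0 < e -> 0 < h -> 0 < h' ->
  y * (x + x') <= e / 2 * (h * x ^+ 2 + h' * x' ^+ 2) + y ^+ 2 / (2 * e) * (h^-1 + h'^-1).
Proof.
move=> e0 h0 h'0.
have := mul_le_AMGM x y (mulr_gt0 e0 h0); have := mul_le_AMGM x' y (mulr_gt0 e0 h'0).
have -> : y ^+ 2 / (2 * (e * h)) = y ^+ 2 / (2 * e) * h^-1 by field; rewrite !gt_eqF.
have -> : y ^+ 2 / (2 * (e * h')) = y ^+ 2 / (2 * e) * h'^-1 by field; rewrite !gt_eqF.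
move=> *; rewrite mulrDr mulrDr; nra.
Qed.

End real_inequalities.

Section increasing_sequence.
Context {R : realType}.
Variables (b : nat -> R) (m : nat).
Hypothesis b_incr : forall k, (k < m)%N -> b k < b k.+1.

Lemma incr_seq_lt i j : (i < j)%N -> (j <= m)%N -> b i < b j.
Proof.
move=> ij jm.
apply: (homo_ltn_in (D := [pred k | (k <= m)%N]) (r := fun x y => x < y)) => //.
- exact: lt_trans.
- by move=> ? ? _ /= jm' ? /andP[_ /ltnW /leq_trans]; apply.
- by move=> k _ /= km; apply: b_incr.
- by rewrite inE /= (leq_trans (ltnW ij)).
Qed.

Lemma incr_seq_le i j : (i <= j)%N -> (j <= m)%N -> b i <= b j.
Proof.
by rewrite leq_eqVlt => /predU1P[-> //|ij jm]; apply/ltW/incr_seq_lt.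
Qed.

End increasing_sequence.

Section integration.
Context {R : realType}.
Implicit Types (itv : interval R) (f g w : R -> R).

Lemma integrable_mul_bounded itv w g (M : R) :
  mu.-integrable [set` itv] (EFin \o w) -> measurable_fun [set` itv] g ->
  (forall x, x \in itv -> `|g x| <= M) ->
  mu.-integrable [set` itv] (EFin \o (fun x => w x * g x)).
Proof.
move=> wi mg gM.
have gb : [bounded g x | x in [set` itv]].
  rewrite /bounded_near; near=> M' => x itv_x /=; apply: le_trans (gM x itv_x) _.
  by near: M'; apply: nbhs_pinfty_ge; rewrite num_real.
by apply: (eq_integrable _ _ _ _ (integrableMl _ wi mg gb)).
Unshelve. all: by end_near. Qed.

Lemma integrableZl_EFin itv (k : R) f : mu.-integrable [set` itv] (EFin \o f) ->
  mu.-integrable [set` itv] (EFin \o (fun x => k * f x)).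
Proof. by move=> fi; apply: (eq_integrable _ _ _ _ (integrableZl _ k fi)). Qed.

Lemma integrable_sum_EFin itv (J : Type) (s : seq J) (f : J -> R -> R) :
  (forall j, mu.-integrable [set` itv] (EFin \o f j)) ->
  mu.-integrable [set` itv] (EFin \o (fun x => \sum_(j <- s) f j x)).
Proof.
move=> fi; apply: (eq_integrable _ _ _ _ (integrable_sum _ s (fun j _ => fi j))) => //.
by move=> x _; rewrite /= sumEFin.
Qed.

Lemma Rintegral_sum itv (J : Type) (s : seq J) (f : J -> R -> R) :
  (forall j, mu.-integrable [set` itv] (EFin \o f j)) ->
  \int[mu]_(x in [set` itv]) (\sum_(j <- s) f j x) =
  \sum_(j <- s) \int[mu]_(x in [set` itv]) f j x.
Proof.
move=> fi; elim: s => [|j s IH].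
  by under eq_Rintegral do rewrite big_nil; rewrite big_nil Rintegral_cst// mul0r.
under eq_Rintegral do rewrite big_cons.
by rewrite RintegralD// ?IH ?big_cons//; exact: integrable_sum_EFin.
Qed.

Lemma RintegralN itv f : mu.-integrable [set` itv] (EFin \o f) ->
  \int[mu]_(x in [set` itv]) - f x = - \int[mu]_(x in [set` itv]) f x.
Proof.
move=> fi; rewrite -mulN1r -RintegralZl//.
by apply: eq_Rintegral => x _; rewrite mulN1r.
Qed.

Lemma Rintegral_itv_partition (b : nat -> R) (m : nat) g :
  (forall k, (k < m)%N -> b k < b k.+1) ->
  mu.-integrable `]b 0%N, b m[ (EFin \o g) ->
  \int[mu]_(x in `]b 0%N, b m[) g x =
  \sum_(k < m) \int[mu]_(x in `]b k, b k.+1[) g x.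
Proof.
elim: m => [|m IH] b_incr gi.
  by rewrite big_ord0 set_itv_ge ?Rintegral_set0// bnd_simp ltxx.
have b0m := incr_seq_le b_incr (leq0n m) (leqnSn m).
have bm : b m < b m.+1 by exact: b_incr.
have gi' : mu.-integrable `]b 0%N, b m[ (EFin \o g).
  by apply: integrableS gi => //; apply: subset_itv; rewrite bnd_simp// ltW.
rewrite big_ord_recr /= -IH //; last by move=> k km; apply: b_incr; rewrite ltnS ltnW.
rewrite -(Rintegral_itvB (x := b m) gi) ?bnd_simp// (Rintegral_itv_bndo_bndc gi').
by rewrite addrC subrK.
Qed.

Lemma integrable_horner (l r : bool) (a c : R) (p : {poly R}) :
  mu.-integrable [set` Interval (BSide l a) (BSide r c)] (EFin \o horner p).
Proof.
apply: (@integrableS _ _ _ mu `[a, c]) => //.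
  by apply: subset_itv; rewrite bnd_simp; case: l r => -[].
apply: continuous_compact_integrable; first exact: segment_compact.
by apply: continuous_subspaceT => x; exact: continuous_horner.
Qed.

Lemma Rintegral_deriv_poly (a c : R) (p : {poly R}) : a < c ->
  \int[mu]_(x in `]a, c[) (p^`()).[x] = p.[c] - p.[a].
Proof.
move=> ac; have p_cont : continuous (horner p) by move=> x; exact: continuous_horner.
rewrite Rintegral_itv_obnd_cbnd ?Rintegral_itv_bndo_bndc; try exact: integrable_horner.
rewrite /Rintegral (@continuous_FTC2 _ _ (horner p))//=.
- by apply: continuous_subspaceT => x; exact: continuous_horner.
- split; first by move=> x _; exact: derivable_horner.
  + exact: cvg_at_right_filter (p_cont a).
  + exact: cvg_at_left_filter (p_cont c).
- by move=> x _; rewrite -derivE.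
Qed.

Lemma Rintegral_affine_sqr (a c U s : R) : a < c ->
  \int[mu]_(x in `]a, c[) (U + s * (x - a)) ^+ 2 =
  (c - a) * U ^+ 2 + U * s * (c - a) ^+ 2 + s ^+ 2 * (c - a) ^+ 3 / 3.
Proof.
move=> ac; pose G : {poly R} := 'X - a%:P.
pose p : {poly R} := U ^+ 2 *: G + (U * s) *: G ^+ 2 + (s ^+ 2 / 3) *: G ^+ 3.
have -> : (fun x => (U + s * (x - a)) ^+ 2) = fun x => (p^`()).[x].
  apply/funext => x.
  by rewrite /p /G !(derivD, derivN, derivZ, deriv_exp, derivX, derivC) !hornerE /=; field.
by rewrite Rintegral_deriv_poly// /p /G !hornerE /=; field.
Qed.

Lemma le_Rintegral_affine_sqr (a c w0 U s : R) g : a < c ->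
  mu.-integrable `]a, c[ (EFin \o g) ->
  (forall x, a < x < c -> w0 * (U + s * (x - a)) ^+ 2 <= g x) ->
  w0 * ((c - a) * U ^+ 2 + U * s * (c - a) ^+ 2 + s ^+ 2 * (c - a) ^+ 3 / 3)
  <= \int[mu]_(x in `]a, c[) g x.
Proof.
move=> ac gi g_ge; pose q : {poly R} := (U%:P + s *: ('X - a%:P)) ^+ 2.
have qE x : q.[x] = (U + s * (x - a)) ^+ 2 by rewrite !hornerE.
rewrite -Rintegral_affine_sqr// -RintegralZl//; last first.
  by apply: (eq_integrable _ _ _ _ (integrable_horner false true a c q)) => // x _ /=; rewrite qE.
apply: le_Rintegral => //.
apply: (eq_integrable _ _ _ _ (integrable_horner false true a c (w0 *: q))) => // x _ /=.
by rewrite hornerZ qE.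
Qed.

End integration.

Section gram.
Context {R : realType}.
Variables (itv : interval R) (w : R -> R) (m : nat) (phi : 'I_m -> R -> R).
Hypothesis w_int : mu.-integrable [set` itv] (EFin \o w).
Hypothesis phi_meas : forall i, measurable_fun [set` itv] (phi i).
Hypothesis phi_bounded : forall i, exists M, forall x, x \in itv -> `|phi i x| <= M.

Lemma integrable_gram_entry i j :
  mu.-integrable [set` itv] (EFin \o (fun x => w x * phi i x * phi j x)).
Proof.
have [[Mi phi_i] [Mj phi_j]] := (phi_bounded i, phi_bounded j).
apply: (eq_integrable _ _ _ _ (integrable_mul_bounded (M := Mi * Mj) w_int
  (measurable_funM (phi_meas i) (phi_meas j)) _)) => //.
- by move=> x _; rewrite /= mulrA.
- by move=> x xi; rewrite normrM ler_pM ?phi_i ?phi_j.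
Qed.

Lemma gram_sqr_expand (v : 'I_m -> R) x :
  w x * (\sum_i v i * phi i x) ^+ 2 =
  \sum_i \sum_j v i * v j * (w x * phi i x * phi j x).
Proof.
rewrite expr2 big_distrlr mulr_sumr; apply: eq_bigr => i _.
by rewrite mulr_sumr; apply: eq_bigr => j _ /=; ring.
Qed.

Lemma integrable_gram_sqr (v : 'I_m -> R) :
  mu.-integrable [set` itv] (EFin \o (fun x => w x * (\sum_i v i * phi i x) ^+ 2)).
Proof.
apply: (eq_integrable _ _ _ _ (integrable_sum_EFin _ (fun i =>
  integrable_sum_EFin _ (fun j => integrableZl_EFin (v i * v j) (integrable_gram_entry i j)))))
  => // x _.
by rewrite /= gram_sqr_expand.
Qed.

Lemma Rintegral_gram_sqr (v : 'I_m -> R) :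
  \sum_i \sum_j v i * v j * \int[mu]_(x in [set` itv]) (w x * phi i x * phi j x)
  = \int[mu]_(x in [set` itv]) (w x * (\sum_i v i * phi i x) ^+ 2).
Proof.
under [RHS]eq_Rintegral do rewrite gram_sqr_expand.
rewrite Rintegral_sum => [|i]; last first.
  by apply: integrable_sum_EFin => j; exact/integrableZl_EFin/integrable_gram_entry.
apply: eq_bigr => i _; rewrite Rintegral_sum => [|j]; last first.
  exact/integrableZl_EFin/integrable_gram_entry.
by apply: eq_bigr => j _; rewrite RintegralZl//; exact: integrable_gram_entry.
Qed.

End gram.

Section relu_heav.
Context {R : realType}.
Implicit Types t c : R.

Lemma relu_id t : 0 <= t -> relu t = t.
Proof. by move=> t0; rewrite /relu max_r. Qed.

Lemma relu_eq0 t : t <= 0 -> relu t = 0.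
Proof. by move=> t0; rewrite /relu max_l. Qed.

Lemma heav_gt0 t : 0 < t -> heav t = 1.
Proof. by rewrite /heav => ->. Qed.

Lemma heav_lt0 t : t < 0 -> heav t = 0.
Proof. by move=> t0; rewrite /heav ltNge (ltW t0) /= lt_eqF. Qed.

Lemma heav0 : heav 0 = 1 / 2 :> R.
Proof. by rewrite /heav ltxx eqxx. Qed.

Lemma heav_nondecreasing : {homo @heav R : s t / s <= t}.
Proof.
move=> s t st; rewrite /heav.
by case: (ltgtP 0 s) => s0; case: (ltgtP 0 t) => t0 //=; lra.
Qed.

Lemma relu_nondecreasing : {homo @relu R : s t / s <= t}.
Proof. by move=> s t st; rewrite /relu le_max2. Qed.

Lemma relu_shift_measurable (itv : interval R) c :
  measurable_fun [set` itv] (fun x => relu (x - c)).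
Proof.
by apply: nondecreasing_measurable => // x y xy; rewrite relu_nondecreasing// lerB.
Qed.

Lemma heav_shift_measurable (itv : interval R) c :
  measurable_fun [set` itv] (fun x => heav (x - c)).
Proof.
by apply: nondecreasing_measurable => // x y xy; rewrite heav_nondecreasing// lerB.
Qed.

Lemma relu_shift_bounded c :
  exists M, forall x, x \in `]0, 1[ -> `|relu (x - c)| <= M.
Proof.
exists (1 + `|c|) => x; rewrite in_itv /= => /andP[x0 x1].
rewrite ger0_norm ?le_max ?lexx// /relu ge_max ler_wpDl ?normr_ge0 ?ltW//=.
by have := ler_norm (- c); rewrite normrN; lra.
Qed.

Lemma heav_norm_le1 t : `|heav t| <= 1.
Proof.
rewrite /heav; case: ifP => _; [|case: ifP => _]; rewrite ?normr1 ?normr0 ?ler01//.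
by rewrite ger0_norm; lra.
Qed.

End relu_heav.

Section splines.
Context {R : realType}.
Variables (n : nat) (b a d : nat -> R).

Definition slope k := \sum_(i < k.+1) a i.

Definition knot_value k := \sum_(i < k.+1) a i * (b k - b i) - \sum_(j < k) d j.

Definition relu_spline x :=
  \sum_(i < n.+1) a i * relu (x - b i) - \sum_(j < n) d j * heav (x - b j.+1).

Definition step_spline x := \sum_(i < n.+1) a i * heav (x - b i).

Lemma slopeS k : a k.+1 = slope k.+1 - slope k.
Proof. by rewrite /slope big_ord_recr /=; ring. Qed.

Lemma knot_value_jump j :
  knot_value j.+1 = knot_value j + slope j * (b j.+1 - b j) - d j.
Proof.
rewrite /knot_value /slope big_ord_recr [\sum_(i < j.+1) d i]big_ord_recr /=.
rewrite subrr mulr0 addr0 mulr_suml.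
have -> : \sum_(i < j.+1) a i * (b j.+1 - b i) =
    \sum_(i < j.+1) (a i * (b j - b i) + a i * (b j.+1 - b j)).
  by apply: eq_bigr => i _; ring.
by rewrite big_split /=; ring.
Qed.

Lemma sum_sqr_le_slope : \sum_(i < n.+1) a i ^+ 2 <= 4 * \sum_(k < n.+1) slope k ^+ 2.
Proof.
rewrite big_ord_recl [X in _ <= _ * X]big_ord_recl /=.
have diff : \sum_(k < n) a (bump 0 k) ^+ 2 <=
    \sum_(k < n) (2 * slope k.+1 ^+ 2 + 2 * slope k ^+ 2).
  by apply: ler_sum => k _; rewrite slopeS; have := sqr_ge0 (slope k.+1 + slope k); lra.
have shift : \sum_(k < n) slope k ^+ 2 <= slope 0 ^+ 2 + \sum_(k < n) slope k.+1 ^+ 2.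
  rewrite -[X in _ <= X](big_ord_recl n (fun k => slope k ^+ 2)) big_ord_recr /=.
  by rewrite lerDl sqr_ge0.
rewrite big_split /= -!mulr_sumr in diff.
have : a 0%N = slope 0 by rewrite /slope big_ord1.
move=> ->; have := sqr_ge0 (slope 0); lra.
Qed.

Hypothesis b_incr : forall k, (k <= n)%N -> b k < b k.+1.

Lemma knot_lt i j : (i < j)%N -> (j <= n.+1)%N -> b i < b j.
Proof. exact: (@incr_seq_lt _ b n.+1 b_incr). Qed.

Lemma knot_le i j : (i <= j)%N -> (j <= n.+1)%N -> b i <= b j.
Proof. exact: (@incr_seq_le _ b n.+1 b_incr). Qed.

Lemma hh_gt0 k : (k <= n)%N -> 0 < hh b k.
Proof. by move=> kn; rewrite subr_gt0 b_incr. Qed.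

Lemma hmin_le k : (k <= n)%N -> hmin n b <= hh b k.
Proof. by move=> kn; exact: (bigmin_le _ (Ordinal (kn : (k < n.+1)%N))). Qed.

Lemma hmin_gt0 : 0 < hmin n b.
Proof.
by apply/bigmin_gtP; split=> [|i _]; rewrite hh_gt0// -ltnS.
Qed.

Section on_piece.
Variables (k : nat) (x : R).
Hypotheses (kn : (k <= n)%N) (bkx : b k < x) (xbk : x < b k.+1).

Lemma knot_below_piece i : (i <= k)%N -> b i < x.
Proof. by move=> ik; apply: le_lt_trans bkx; apply: knot_le (leq_trans kn _). Qed.

Lemma knot_above_piece i : (k < i)%N -> (i <= n.+1)%N -> x < b i.
Proof. by move=> ki ni; apply: lt_le_trans xbk _; apply: knot_le. Qed.

Lemma relu_spline_piece : relu_spline x = knot_value k + slope k * (x - b k).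
Proof.
rewrite /relu_spline.
rewrite (@big_ord_trunc _ n.+1 k.+1 (fun i => a i * relu (x - b i))) //; last first.
  move=> i /andP[ki ni]; rewrite relu_eq0 ?mulr0// subr_le0.
  by apply/ltW/knot_above_piece => //; exact: ltnW.
rewrite (@big_ord_trunc _ n k (fun j => d j * heav (x - b j.+1))) //; last first.
  move=> j /andP[kj jn]; rewrite heav_lt0 ?mulr0// subr_lt0.
  by apply: knot_above_piece; rewrite ltnS// ltnW.
rewrite /knot_value /slope mulr_suml.
have -> : \sum_(i < k.+1) a i * relu (x - b i) =
    \sum_(i < k.+1) (a i * (b k - b i) + a i * (x - b k)).
  apply: eq_bigr => i _; rewrite relu_id; last first.
    by rewrite subr_ge0 ltW// knot_below_piece// -ltnS.
  by ring.
have -> : \sum_(j < k) d j * heav (x - b j.+1) = \sum_(j < k) d j.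
  by apply: eq_bigr => j _; rewrite heav_gt0 ?mulr1// subr_gt0 knot_below_piece.
by rewrite big_split /=; ring.
Qed.

Lemma step_spline_piece : step_spline x = slope k.
Proof.
rewrite /step_spline.
rewrite (@big_ord_trunc _ n.+1 k.+1 (fun i => a i * heav (x - b i))) //; last first.
  move=> i /andP[ki ni]; rewrite heav_lt0 ?mulr0// subr_lt0.
  by apply: knot_above_piece => //; exact: ltnW.
apply: eq_bigr => i _; rewrite heav_gt0 ?mulr1// subr_gt0 knot_below_piece//.
by rewrite -ltnS.
Qed.

End on_piece.

Lemma step_spline_knot j : (j < n)%N ->
  \sum_(i < n.+1) a i * heav (b j.+1 - b i) = (slope j + slope j.+1) / 2.
Proof.
move=> jn.
rewrite (@big_ord_trunc _ n.+1 j.+2 (fun i => a i * heav (b j.+1 - b i))) //; last first.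
  by move=> i /andP[ji ni]; rewrite heav_lt0 ?mulr0// subr_lt0 knot_lt// ltnW.
rewrite big_ord_recr /= subrr heav0.
have -> : \sum_(i < j.+1) a i * heav (b j.+1 - b i) = slope j.
  by apply: eq_bigr => i _; rewrite heav_gt0 ?mulr1// subr_gt0 knot_lt// ltnS ltnW.
by rewrite (slopeS j); field.
Qed.

End splines.

Section coercivity.
Context {R : realType}.
Variables (n : nat) (b a d : nat -> R).
Hypothesis b_incr : forall k, (k <= n)%N -> b k < b k.+1.

(* [relu_energy k] is the integral of the square of [knot_value k + slope k * (x - b k)]
   over the [k]-th piece. *)
Definition relu_energy k := hh b k * knot_value b a d k ^+ 2
  + knot_value b a d k * slope a k * hh b k ^+ 2 + slope a k ^+ 2 * hh b k ^+ 3 / 3.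

Lemma relu_spline_coercive (w0 : R) : 0 <= w0 ->
  w0 * hmin n b ^+ 3 / 96 * (\sum_(i < n.+1) a i ^+ 2)
    + w0 / 24 * (\sum_(i < n) htil b i.+1 * d i ^+ 2)
  <= w0 * \sum_(k < n.+1) relu_energy k.
Proof.
move=> w0_ge0; pose U := knot_value b a d; pose c := slope a; pose h := hh b.
pose V k := U k + c k * h k; pose X k := h k * (U k ^+ 2 + V k ^+ 2).
have pieces : (\sum_(k < n.+1) X k) / 12 + (\sum_(k < n.+1) h k ^+ 3 * c k ^+ 2) / 24
    <= \sum_(k < n.+1) relu_energy k.
  rewrite !mulr_suml -big_split /=; apply: ler_sum => k _.
  by apply: affine_energy_ge; apply/ltW/(hh_gt0 b_incr); rewrite -ltnS.
have jumps : \sum_(i < n) htil b i.+1 * d i ^+ 2 <= 2 * \sum_(k < n.+1) X k.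
  have -> : 2 * \sum_(k < n.+1) X k =
      \sum_(k < n.+1) (2 * (h k * V k ^+ 2) + 2 * (h k * U k ^+ 2)).
    by rewrite mulr_sumr; apply: eq_bigr => k _; rewrite /X; ring.
  have hsqr_ge0 (Z : nat -> R) k : (k <= n)%N -> 0 <= 2 * (h k * Z k ^+ 2).
    by move=> kn; rewrite mulr_ge0 ?ler0n// mulr_ge0 ?sqr_ge0// ltW// (hh_gt0 b_incr).
  apply: le_trans (sum_shift_le (hsqr_ge0 V) (hsqr_ge0 U)).
  apply: ler_sum => j _; have jn : (j < n)%N := ltn_ord j.
  have -> : d j = V j - U j.+1 by rewrite /V /U /c /h /hh knot_value_jump; ring.
  by apply: jump_sqr_le; apply/ltW/(hh_gt0 b_incr); rewrite // ltnW.
have slopes : hmin n b ^+ 3 * \sum_(i < n.+1) a i ^+ 2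
    <= 4 * \sum_(k < n.+1) h k ^+ 3 * c k ^+ 2.
  have hm_ge0 : 0 <= hmin n b ^+ 3 by rewrite exprn_ge0 ?ltW ?hmin_gt0.
  apply: le_trans (ler_wpM2l hm_ge0 (sum_sqr_le_slope n a)) _.
  rewrite mulrCA ler_wpM2l// mulr_sumr; apply: ler_sum => k _.
  have kn : (k <= n)%N by rewrite -ltnS.
  rewrite ler_wpM2r ?sqr_ge0// lerXn2r ?nnegrE ?hmin_le//.
    exact/ltW/hmin_gt0.
  exact/ltW/(hh_gt0 b_incr).
have := ler_wpM2l w0_ge0 pieces; apply: le_trans.
rewrite -!mulrA -mulrDr ler_wpM2l//; lra.
Qed.

Lemma step_spline_coercive (w0 tau : R) (W : nat -> R) : 0 < w0 -> 0 < tau <= 1 ->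
  w0 * (1 - tau) * hmin n b / 4 * (\sum_(i < n.+1) a i ^+ 2)
    - 1 / (2 * tau * w0) *
      (\sum_(i < n) W i ^+ 2 * ((hh b i)^-1 + (hh b i.+1)^-1) * d i ^+ 2)
  <= w0 * (\sum_(k < n.+1) hh b k * slope a k ^+ 2)
     - \sum_(j < n) d j * W j * (slope a j + slope a j.+1).
Proof.
move=> w0_gt0 /andP[tau_gt0 tau_le1].
pose F k := hh b k * slope a k ^+ 2.
have F_ge0 k : (k <= n)%N -> 0 <= F k.
  by move=> kn; rewrite mulr_ge0 ?sqr_ge0 ?ltW ?(hh_gt0 b_incr).
set B := \sum_(i < n) _; set S := \sum_(j < n) _.
rewrite -/(\sum_(k < n.+1) F k).
have cross : S <= tau * w0 * \sum_(k < n.+1) F k + 1 / (2 * tau * w0) * B.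
  have e_gt0 : 0 < tau * w0 by rewrite mulr_gt0.
  have -> : 1 / (2 * tau * w0) * B = \sum_(j < n)
      (d j * W j) ^+ 2 / (2 * (tau * w0)) * ((hh b j)^-1 + (hh b j.+1)^-1).
    rewrite /B mulr_sumr; apply: eq_bigr => j _; have jn := ltn_ord j; field.
    by rewrite !gt_eqF ?(hh_gt0 b_incr)// ltnW.
  apply: le_trans.
    apply: ler_sum => j _; have jn := ltn_ord j.
    exact: cross_term_le e_gt0 (hh_gt0 b_incr (ltnW jn)) (hh_gt0 b_incr jn).
  rewrite big_split /= -mulr_sumr lerD2r.
  apply: le_trans (ler_wpM2l _ (sum_shift_le F_ge0 F_ge0)) _.
    by rewrite divr_ge0 ?ltW.
  rewrite big_split /=; set SF := \sum_(k < n.+1) F k.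
  by have -> : tau * w0 / 2 * (SF + SF) = tau * w0 * SF by field.
have slopes : hmin n b * \sum_(i < n.+1) a i ^+ 2 <= 4 * \sum_(k < n.+1) F k.
  apply: le_trans (ler_wpM2l (ltW (hmin_gt0 b_incr)) (sum_sqr_le_slope n a)) _.
  rewrite mulrCA ler_wpM2l// mulr_sumr; apply: ler_sum => k _.
  by rewrite ler_wpM2r ?sqr_ge0// hmin_le// -ltnS.
have w0tau_ge0 : 0 <= w0 * (1 - tau) by rewrite mulr_ge0 ?subr_ge0// ltW.
have := ler_wpM2l w0tau_ge0 slopes; lra.
Qed.

End coercivity.

Section energy.
Context {R : realType}.
Variables (n : nat) (b : nat -> R) (w : R -> R) (w0 : R).
Hypotheses (b0 : b 0%N = 0) (b1 : b n.+1 = 1).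
Hypothesis b_incr : forall k, (k <= n)%N -> b k < b k.+1.
Hypothesis w_ge : forall x, 0 < x < 1 -> w0 <= w x.

Lemma piecewise_affine_energy_ge (f : R -> R) (U s : nat -> R) :
  mu.-integrable `]0, 1[ (EFin \o (fun x => w x * f x ^+ 2)) ->
  (forall k x, (k <= n)%N -> b k < x < b k.+1 -> f x = U k + s k * (x - b k)) ->
  w0 * \sum_(k < n.+1)
         (hh b k * U k ^+ 2 + U k * s k * hh b k ^+ 2 + s k ^+ 2 * hh b k ^+ 3 / 3)
  <= I01 (fun x => w x * f x ^+ 2).
Proof.
move=> wf_int f_affine.
have itvE : `]0, 1[ = `]b 0%N, b n.+1[ :> interval R by rewrite b0 b1.
rewrite /I01 itvE in wf_int *.
rewrite Rintegral_itv_partition// mulr_sumr; apply: ler_sum => k _.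
have kn : (k <= n)%N by rewrite -ltnS.
have b0k : b 0%N <= b k by apply: (knot_le b_incr); rewrite // leqW.
have bkn : b k.+1 <= b n.+1 by exact: (knot_le b_incr).
apply: le_Rintegral_affine_sqr; first exact: b_incr.
  by apply: integrableS wf_int => //; apply: subset_itv; rewrite bnd_simp.
move=> x /andP[bkx xbk]; rewrite (f_affine k x kn) ?bkx// ler_wpM2r ?sqr_ge0// w_ge//.
by rewrite -b0 -b1 (le_lt_trans b0k bkx) (lt_le_trans xbk bkn).
Qed.

Variables (a d : nat -> R).

Lemma relu_spline_energy_ge :
  mu.-integrable `]0, 1[ (EFin \o (fun x => w x * relu_spline n b a d x ^+ 2)) ->
  w0 * \sum_(k < n.+1) relu_energy b a d k
  <= I01 (fun x => w x * relu_spline n b a d x ^+ 2).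
Proof.
move=> u_int; apply: piecewise_affine_energy_ge => // k x kn /andP[bkx xbk].
exact: relu_spline_piece.
Qed.

Lemma step_spline_energy_ge :
  mu.-integrable `]0, 1[ (EFin \o (fun x => w x * step_spline n b a x ^+ 2)) ->
  w0 * \sum_(k < n.+1) hh b k * slope a k ^+ 2
  <= I01 (fun x => w x * step_spline n b a x ^+ 2).
Proof.
move=> v_int.
have := piecewise_affine_energy_ge (U := slope a) (s := fun=> 0) v_int.
have -> : \sum_(k < n.+1) (hh b k * slope a k ^+ 2 + slope a k * 0 * hh b k ^+ 2
    + 0 ^+ 2 * hh b k ^+ 3 / 3) = \sum_(k < n.+1) hh b k * slope a k ^+ 2.
  by apply: eq_bigr => k _; ring.
apply=> k x kn /andP[bkx xbk].
by rewrite (step_spline_piece a b_incr kn bkx xbk) mul0r addr0.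
Qed.

End energy.

Lemma bilinear_form_mxE (T : comPzRingType) m k (x : 'rV[T]_m) (M : 'M[T]_(m, k))
    (y : 'rV[T]_k) :
  (x *m M *m y^T) 0 0 = \sum_i \sum_j x 0 i * y 0 j * M i j.
Proof.
rewrite mxE; under eq_bigr do rewrite !mxE big_distrl /=.
rewrite exchange_big /=; apply: eq_bigr => i _; apply: eq_bigr => j _.
by rewrite mulrAC mulrC mulrA.
Qed.

Lemma bilinear_form_trmx (T : comPzRingType) m k (x : 'rV[T]_m) (M : 'M[T]_(m, k))
    (y : 'rV[T]_k) :
  (y *m M^T *m x^T) 0 0 = (x *m M *m y^T) 0 0.
Proof.
have -> : y *m M^T *m x^T = (x *m M *m y^T)^T by rewrite !trmx_mul trmxK mulmxA.
by rewrite mxE.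
Qed.

Section block_forms.
Context {R : realType}.

Lemma qform_block_mx n (A : 'M[R]_n.+1) (B : 'M[R]_(n.+1, n))
    (C : 'M[R]_(n, n.+1)) (D : 'M[R]_n) (alpha : 'rV[R]_n.+1) (beta : 'rV[R]_n) :
  qform (block_mx A B C D) alpha beta =
  (alpha *m A *m alpha^T) 0 0 + (alpha *m B *m beta^T) 0 0
  + (beta *m C *m alpha^T) 0 0 + (beta *m D *m beta^T) 0 0.
Proof.
rewrite /qform /= mul_row_block tr_row_mx mul_row_col !mulmxDl !mxE.
ring.
Qed.

Definition coef m (v : 'rV[R]_m) (i : nat) : R := oapp (v 0) 0 (insub i).

Lemma coefE m (v : 'rV[R]_m) (i : 'I_m) : coef v i = v 0 i.
Proof. by rewrite /coef valK. Qed.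

Lemma sum_coefE m (v : 'rV[R]_m) (F : nat -> R -> R) :
  \sum_(i < m) F i (v 0 i) = \sum_(i < m) F i (coef v i).
Proof. by apply: eq_bigr => i _; rewrite coefE. Qed.

End block_forms.

Section sigma_matrix.
Context {R : realType}.
Variables (n : nat) (b : nat -> R) (w : R -> R).
Hypothesis w_int : mu.-integrable `]0, 1[ (EFin \o w).

Definition relu_heav_basis (i : 'I_(n.+1 + n)) (x : R) : R :=
  match fintype.split i with
  | inl k => relu (x - b k)
  | inr j => - heav (x - b j.+1)
  end.

Lemma relu_heav_basis_measurable i :
  measurable_fun (`]0, 1[ : set R) (relu_heav_basis i).
Proof.
rewrite /relu_heav_basis; case: fintype.split => k; first exact: relu_shift_measurable.
by apply: measurable_funN; exact: heav_shift_measurable.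
Qed.

Lemma relu_heav_basis_bounded (i : 'I_(n.+1 + n)) :
  exists M, forall x, x \in `]0, 1[ -> `|relu_heav_basis i x| <= M.
Proof.
rewrite /relu_heav_basis; case: fintype.split => k; first exact: relu_shift_bounded.
by exists 1 => x _; rewrite normrN heav_norm_le1.
Qed.

Let basis_entry_int := integrable_gram_entry w_int relu_heav_basis_measurable
  relu_heav_basis_bounded.

Lemma HSigma_gram :
  HSigma n b w =
  \matrix_(i, j) I01 (fun x => w x * relu_heav_basis i x * relu_heav_basis j x).
Proof.
apply/matrixP => i j; rewrite [RHS]mxE /HSigma.
have := basis_entry_int i j; rewrite /relu_heav_basis.
case: split_ordP => k ->; case: split_ordP => l ->.
all: rewrite ?block_mxEul ?block_mxEur ?block_mxEdl ?block_mxEdr mxE => entry_int //.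
- rewrite -[RHS]opprK -(RintegralN entry_int); congr (- _).
  by apply: eq_Rintegral => x _; ring.
- rewrite -[RHS]opprK -(RintegralN entry_int); congr (- _).
  by apply: eq_Rintegral => x _; ring.
- by apply: eq_Rintegral => x _; ring.
Qed.

Lemma relu_heav_basis_sum (alpha : 'rV[R]_n.+1) (beta : 'rV[R]_n) x :
  \sum_i row_mx alpha beta 0 i * relu_heav_basis i x
  = relu_spline n b (coef alpha) (coef beta) x.
Proof.
rewrite big_split_ord /relu_spline -sumrN /relu_heav_basis.
congr (_ + _); apply: eq_bigr => k _.
  by rewrite row_mxEl (unsplitK (inl k)) coefE.
by rewrite row_mxEr (unsplitK (inr k)) coefE mulrN.
Qed.

Lemma qform_HSigma (alpha : 'rV[R]_n.+1) (beta : 'rV[R]_n) :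
  qform (HSigma n b w) alpha beta =
  I01 (fun x => w x * relu_spline n b (coef alpha) (coef beta) x ^+ 2).
Proof.
rewrite /qform /= HSigma_gram bilinear_form_mxE.
under [RHS]eq_Rintegral do rewrite -relu_heav_basis_sum.
rewrite /I01.
rewrite -(Rintegral_gram_sqr w_int relu_heav_basis_measurable relu_heav_basis_bounded).
by apply: eq_bigr => i _; apply: eq_bigr => j _; rewrite [X in _ * X = _]mxE.
Qed.

Lemma integrable_relu_spline_sqr (alpha : 'rV[R]_n.+1) (beta : 'rV[R]_n) :
  mu.-integrable `]0, 1[
    (EFin \o (fun x => w x * relu_spline n b (coef alpha) (coef beta) x ^+ 2)).
Proof.
apply: (eq_integrable _ _ _ _ (integrable_gram_sqr w_int relu_heav_basis_measurable
  relu_heav_basis_bounded (fun i => row_mx alpha beta 0 i))) => // x _.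
by rewrite /= relu_heav_basis_sum.
Qed.

End sigma_matrix.

Section lambda_matrix.
Context {R : realType}.
Variables (n : nat) (b : nat -> R) (w : R -> R).
Hypothesis w_int : mu.-integrable `]0, 1[ (EFin \o w).
Hypothesis b_incr : forall k, (k <= n)%N -> b k < b k.+1.

Let heav_basis (i : 'I_n.+1) (x : R) := heav (x - b i).

Let heav_basis_measurable i : measurable_fun (`]0, 1[ : set R) (heav_basis i).
Proof. exact: heav_shift_measurable. Qed.

Let heav_basis_bounded i : exists M, forall x, x \in `]0, 1[ -> `|heav_basis i x| <= M.
Proof. by exists 1 => x _; exact: heav_norm_le1. Qed.

Lemma step_spline_sum (alpha : 'rV[R]_n.+1) x :
  \sum_i alpha 0 i * heav_basis i x = step_spline n b (coef alpha) x.
Proof. by apply: eq_bigr => i _; rewrite coefE. Qed.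

Lemma integrable_step_spline_sqr (alpha : 'rV[R]_n.+1) :
  mu.-integrable `]0, 1[ (EFin \o (fun x => w x * step_spline n b (coef alpha) x ^+ 2)).
Proof.
apply: (eq_integrable _ _ _ _ (integrable_gram_sqr w_int heav_basis_measurable
  heav_basis_bounded (fun i => alpha 0 i))) => // x _.
by rewrite /= step_spline_sum.
Qed.

Lemma HLambda_coupling_form (alpha : 'rV[R]_n.+1) (beta : 'rV[R]_n) :
  \sum_i \sum_j alpha 0 i * beta 0 j * - (w (b j.+1) * heav (b j.+1 - b i))
  = - (\sum_(j < n) coef beta j * w (b j.+1)
         * (slope (coef alpha) j + slope (coef alpha) j.+1)) / 2.
Proof.
rewrite exchange_big /= mulNr mulr_suml -sumrN; apply: eq_bigr => j _.
have -> : \sum_i alpha 0 i * beta 0 j * - (w (b j.+1) * heav (b j.+1 - b i)) =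
    - (beta 0 j * w (b j.+1)) * \sum_(i < n.+1) coef alpha i * heav (b j.+1 - b i).
  by rewrite mulr_sumr; apply: eq_bigr => i _; rewrite coefE; ring.
by rewrite step_spline_knot// coefE; ring.
Qed.

Lemma qform_HLambda (alpha : 'rV[R]_n.+1) (beta : 'rV[R]_n) :
  qform (HLambda n b w) alpha beta =
  I01 (fun x => w x * step_spline n b (coef alpha) x ^+ 2)
  - \sum_(j < n) coef beta j * w (b j.+1)
      * (slope (coef alpha) j + slope (coef alpha) j.+1).
Proof.
have lower_tr : \matrix_(i < n, j < n.+1) - (w (b i.+1) * heav (b i.+1 - b j))
    = (\matrix_(i < n.+1, j < n) - (w (b j.+1) * heav (b j.+1 - b i)))^T.
  by apply/matrixP => i j; rewrite !mxE.
rewrite /HLambda lower_tr qform_block_mx bilinear_form_trmx mulmx0 mul0mx.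
rewrite [X in _ + X = _]mxE addr0 !bilinear_form_mxE.
under eq_bigr do under eq_bigr do rewrite mxE.
under [X in _ + X + _ = _]eq_bigr do under eq_bigr do rewrite mxE.
under [X in _ + X = _]eq_bigr do under eq_bigr do rewrite mxE.
rewrite HLambda_coupling_form.
rewrite /I01; under [in RHS]eq_Rintegral do rewrite -step_spline_sum.
rewrite -(Rintegral_gram_sqr w_int heav_basis_measurable heav_basis_bounded).
by rewrite -addrA -splitr.
Qed.

End lambda_matrix.

Theorem lemma4p2 (R : realType) (n : nat) (b : nat -> R) (w : R -> R) (w0 : R) :
  (0 < n)%N ->
  b 0%N = 0 -> b n.+1 = 1 ->
  (forall i : nat, (i <= n)%N -> b i < b i.+1) ->
  {within `]0%R, 1%R[, continuous w} ->
  (@lebesgue_measure R).-integrable `]0%R, 1%R[ (fun x => (w x)%:E) ->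
  0 <= w0 ->
  (forall x : R, 0 < x < 1 -> w0 <= w x) ->
  forall (alpha : 'rV[R]_n.+1) (beta : 'rV[R]_n),
    qform (HSigma n b w) alpha beta >=
      w0 * hmin n b ^+ 3 / 96 * (\sum_(i < n.+1) alpha 0 i ^+ 2)
      + w0 / 24 * (\sum_(i < n) htil b i.+1 * beta 0 i ^+ 2)
  /\
    (0 < w0 -> forall tau : R, 0 < tau <= 1 ->
      qform (HLambda n b w) alpha beta >=
        w0 * (1 - tau) * hmin n b / 4 * (\sum_(i < n.+1) alpha 0 i ^+ 2)
        - 1 / (2 * tau * w0) *
          (\sum_(i < n) w (b i.+1) ^+ 2 * ((hh b i)^-1 + (hh b i.+1)^-1)
                         * beta 0 i ^+ 2)).
Proof.
move=> _ b0 b1 b_incr _ w_int w0_ge0 w_ge alpha beta.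
rewrite (sum_coefE alpha (fun _ t => t ^+ 2)).
rewrite (sum_coefE beta (fun i t => htil b i.+1 * t ^+ 2)).
rewrite (sum_coefE beta
  (fun i t => w (b i.+1) ^+ 2 * ((hh b i)^-1 + (hh b i.+1)^-1) * t ^+ 2)).
split.
  rewrite qform_HSigma//; apply: le_trans (relu_spline_coercive _ _ b_incr w0_ge0) _.
  by apply: relu_spline_energy_ge => //; exact: integrable_relu_spline_sqr.
move=> w0_gt0 tau tau01; rewrite qform_HLambda//.
apply: le_trans (step_spline_coercive _ _ b_incr (fun j => w (b j.+1)) w0_gt0 tau01) _.
by rewrite lerD2r; apply: step_spline_energy_ge => //; exact: integrable_step_spline_sqr.
Qed.
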